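(* Let $G$ be an $n\times n$ Game of Primes grid with $n\ge 2$ (defined in the context), and let $c$ be a corner cell of $G$ at least one of whose neighbors contains a prime number. If $c$ is excited on some day $t$, then $c$ is excited on every day $t'\ge t$.
   Context: A Game of Primes (GOPM) grid of dimension $n$ is an $n\times n$ grid whose cells are filled with the $n^2$ natural numbers $a, a+d, a+2d,\dots,a+(n^2-1)d$ (for fixed integers $a\ge 1$, $d\ge 1$) in snake-like (boustrophedon) order: the first row is filled left to right starting with $a$ in the top-left cell, the second row right to left, the third row left to right, and so on. Two distinct cells are neighbors if they are adjacent horizontally, vertically or diagonally (so a corner cell has exactly 3 neighbors). Each cell is in one of two states, excited or dormant; a configuration (''day'') assigns a state to every cell. For a configuration $s$ and a cell $c$, let $N_s(c)$ be the number of neighbors of $c$ that contain a prime number or are excited in $s$ (or both). The update map $F$ sends $s$ to $F(s)$ where: a cell dormant in $s$ becomes excited iff $N_s(c)\ge 3$ (otherwise stays dormant); a cell excited in $s$ becomes dormant iff $N_s(c)\ge 4$ or $N_s(c)=0$ (otherwise stays excited). Day $0$ has all cells dormant, and day $t+1$ is $F$ applied to day $t$. *)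

From mathcomp Require Import all_boot.
Set Implicit Arguments. Unset Strict Implicit. Unset Printing Implicit Defensive.

(* A cell of the n x n grid: (row i, column j), 0-indexed, row 0 on top. *)
Definition cell (n : nat) := ('I_n * 'I_n)%type.

Definition snake_index (n : nat) (c : cell n) : nat :=
  let i := nat_of_ord c.1 in let j := nat_of_ord c.2 in
  if odd i then i * n + (n.-1 - j) else i * n + j.

Definition gval (n a d : nat) (c : cell n) : nat := a + snake_index c * d.

Definition has_prime (n a d : nat) (c : cell n) : bool := prime (gval a d c).

Definition absdiff (x y : nat) : nat := (x - y) + (y - x).

Definition neighbor (n : nat) (c c' : cell n) : bool :=
  [&& c != c', absdiff c.1 c'.1 <= 1 & absdiff c.2 c'.2 <= 1].

(* A configuration: true = excited, false = dormant. *)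
Definition config (n : nat) := cell n -> bool.

Definition Ncount (n a d : nat) (s : config n) (c : cell n) : nat :=
  #|[pred c' : cell n | neighbor c c' && (has_prime a d c' || s c')]|.

Definition step (n a d : nat) (s : config n) : config n :=
  fun c => let k := Ncount a d s c in
    if s c then ~~ ((4 <= k) || (k == 0)) else 3 <= k.

Definition day (n a d t : nat) : config n :=
  iter t (step a d) (fun _ => false).

Definition is_corner (n : nat) (c : cell n) : bool :=
  ((nat_of_ord c.1 == 0) || (nat_of_ord c.1 == n.-1)) &&
  ((nat_of_ord c.2 == 0) || (nat_of_ord c.2 == n.-1)).

(* A corner cell has at most three neighbours, so its count N_s(c) never
   reaches 4; a neighbour holding a prime keeps N_s(c) positive.  Hence an
   excited corner with a prime neighbour meets neither condition for becoming
   dormant, whatever the configuration of the rest of the grid. *)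

From mathcomp Require Import all_boot.
From mathcomp Require Import zify.

Set Implicit Arguments.
Unset Strict Implicit.

Lemma corner_neighbor_card n (c : cell n) :
  is_corner c -> #|[pred c' : cell n | neighbor c c']| <= 3.
Proof.
case: c => ci cj; rewrite /is_corner /= => hc.
set ci' := if val ci == 0 then 1 else n - 2.
set cj' := if val cj == 0 then 1 else n - 2.
pose candidates := [:: (val ci, cj'); (ci', val cj); (ci', cj')].
pose coords := fun x : cell n => (val x.1, val x.2).
have coords_inj : injective coords.
  by move=> [x1 x2] [y1 y2] /= [/val_inj -> /val_inj ->].
rewrite cardE -(size_map coords) -[3]/(size candidates).
apply: uniq_leq_size; first by rewrite map_inj_uniq // enum_uniq.
move=> z /mapP [[i j]]; rewrite mem_enum inE => nb_ij ->.
move: nb_ij hc; rewrite /neighbor /absdiff /= xpair_eqE -!val_eqE /=.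
rewrite /candidates /coords /ci' /cj' !inE !xpair_eqE /=.
have := ltn_ord i; have := ltn_ord j; have := ltn_ord ci; have := ltn_ord cj.
move: (val i) (val j) (val ci) (val cj) => i0 j0 a b.
by case: (a =P 0) => [->|_]; case: (b =P 0) => [->|_] /=; lia.
Qed.

Lemma Ncount_le_neighbor_card n a d (s : config n) (c : cell n) :
  Ncount a d s c <= #|[pred c' : cell n | neighbor c c']|.
Proof.
by apply: subset_leq_card; apply/subsetP => x; rewrite !inE => /andP[].
Qed.

Lemma Ncount_gt0_prime_neighbor n a d (s : config n) (c c' : cell n) :
  neighbor c c' -> has_prime a d c' -> 0 < Ncount a d s c.
Proof.
by move=> nb_cc' pr_c'; apply/card_gt0P; exists c'; rewrite inE nb_cc' pr_c'.
Qed.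

Lemma step_excited n a d (s : config n) (c : cell n) :
  s c -> step a d s c = (0 < Ncount a d s c < 4).
Proof. by rewrite /step => ->; case: Ncount => [|[|[|[]]]]. Qed.

Lemma iter_stable T (f : T -> T) (P : pred T) x m k :
  (forall y, P y -> P (f y)) -> P (iter m f x) -> P (iter (k + m) f x).
Proof. by move=> fP Pm; elim: k => // k IHk; rewrite addSn iterS fP. Qed.

Theorem theorem4p3 (n a d : nat) (hn : 2 <= n) (ha : 1 <= a) (hd : 1 <= d)
    (c : cell n) (hc : is_corner c)
    (hp : exists c' : cell n, neighbor c c' && has_prime a d c')
    (t : nat) (hex : day a d t c = true) :
  forall t' : nat, t <= t' -> day a d t' c = true.
Proof.
case: hp => c' /andP[nb_cc' pr_c'].
have corner_stays (s : config n) : s c -> step a d s c.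
  move=> sc; rewrite step_excited // (Ncount_gt0_prime_neighbor s nb_cc' pr_c').
  rewrite ltnS; apply: leq_trans (corner_neighbor_card hc).
  exact: Ncount_le_neighbor_card.
move=> t' /subnK <-.
exact: (iter_stable (P := fun s : config n => s c)).
Qed.
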